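(* Consider the o-ACOPF and SOC-ACOPF models described in the context, and assume $(\theta^{\min}_l,\theta^{\max}_l)\subseteq(-\tfrac{\pi}{2},\tfrac{\pi}{2})$ and $\theta^{\min}_l=-\theta^{\max}_l$ for all $l\in\mathcal L$. Let $\Omega_1$ be a (optimal) solution of the SOC-ACOPF model, and recover (map) from it a point of the o-ACOPF model by keeping all variables other than $\theta_l$, setting $v_n:=\sqrt{V_n}$ for all $n$, and $\theta^{\mathrm{rec}}_l:=\arcsin\!\big(\tfrac{X_lp_{s_l}-R_lq_{s_l}}{v_{s_l}v_{r_l}}\big)=\arcsin\!\big(\tfrac{\theta_l}{v_{s_l}v_{r_l}}\big)$ for all $l$. A necessary condition for this recovered point to be a feasible solution of the o-ACOPF model is $$V_{s_l}V_{r_l}\sin^2(\theta^{\max}_l)\ge\theta_l^2\quad\forall l\in\mathcal L,$$ which is a conic (hence convex) constraint.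
   Context: Power network: finite node set $\mathcal N$, branch set $\mathcal L$; each branch $l$ has a sending-end node $s_l$ and a receiving-end node $r_l$, and for a nodal quantity $x$ we write $x_{s_l},x_{r_l}$ for its values at these nodes. Incidence coefficients: $A^+_{nl}=1,A^-_{nl}=0$ if $n=s_l$; $A^+_{nl}=-1,A^-_{nl}=-1$ if $n=r_l$; $A^{\pm}_{nl}=0$ otherwise. Parameters: branch ($\Pi$-model) resistance $R_l$, reactance $X_l$, end shunt susceptances $B_{s_l},B_{r_l}$, ampacity $\widetilde K_l$; nodal shunt conductance/susceptance $G_n,B_n$; loads $p_{d_n},q_{d_n}$; bounds $v^{\min}_n,v^{\max}_n,\theta^{\min}_l,\theta^{\max}_l,\theta^{\min}_n,\theta^{\max}_n,p^{\min}_n,p^{\max}_n,q^{\min}_n,q^{\max}_n$. The objective $f$ is convex. o-ACOPF model: minimize $f$ over variables $p_n,q_n,V_n,v_n,\theta_n$ ($n\in\mathcal N$), $p_{s_l},q_{s_l},p_{o_l},q_{o_l},\theta_l$ ($l\in\mathcal L$) subject to, for all $n,l$: (A) $p_n-p_{d_n}=\sum_l(A^+_{nl}p_{s_l}-A^-_{nl}p_{o_l})+G_nV_n$, $q_n-q_{d_n}=\sum_l(A^+_{nl}q_{s_l}-A^-_{nl}q_{o_l})-B_nV_n$; (B) $V_{s_l}-V_{r_l}=2R_lp_{s_l}+2X_lq_{s_l}-R_lp_{o_l}-X_lq_{o_l}$; (C) $v_{s_l}v_{r_l}\sin\theta_l=X_lp_{s_l}-R_lq_{s_l}$; (D) for $e\in\{s,r\}$: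 $\big(p_{e_l}^2+(q_{e_l}-V_{e_l}B_{e_l})^2\big)/V_{e_l}\le\widetilde K_l$, where $p_{r_l}:=p_{s_l}-p_{o_l}$, $q_{r_l}:=q_{s_l}-q_{o_l}$; (E) $V_n=v_n^2$; (F) $\theta_l=\theta_{s_l}-\theta_{r_l}$; (G) $p_{o_l}=\frac{p_{s_l}^2+q_{s_l}^2}{V_{s_l}}R_l$, $q_{o_l}=\frac{p_{s_l}^2+q_{s_l}^2}{V_{s_l}}X_l$; (H) $v_n\in(v^{\min}_n,v^{\max}_n)$, $\theta_l\in(\theta^{\min}_l,\theta^{\max}_l)$, $\theta_n\in(\theta^{\min}_n,\theta^{\max}_n)$, $p_n\in(p^{\min}_n,p^{\max}_n)$, $q_n\in(q^{\min}_n,q^{\max}_n)$. SOC-ACOPF model: minimize $f$ over variables $p_n,q_n,V_n,\theta_n$, $p_{s_l},q_{s_l},p_{o_l},q_{o_l},\theta_l$ subject to (A), (B), (F), the bounds in (H) on $\theta_l,\theta_n,p_n,q_n$, $V_n\in((v^{\min}_n)^2,(v^{\max}_n)^2)$, and for all $l$ and $e\in\{s,r\}$ (with $p_{r_l},q_{r_l}$ as in (D)): $K^e_{o_l}\ge q_{o_l}\ge\frac{p_{e_l}^2+q_{e_l}^2}{V_{e_l}}X_l$ where $K^e_{o_l}=(\widetilde K_l-V_{e_l}B_{e_l}^2+2q_{e_l}B_{e_l})X_l$; $p_{o_l}X_l=q_{o_l}R_l$; $\theta_l=X_lp_{s_l}-R_lq_{s_l}$. A feasible solution satisfies all constraints of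 the model. *)

From HB Require Import structures.
From mathcomp Require Import all_boot all_order all_algebra.
From mathcomp Require Import all_classical all_reals all_analysis.
Set Implicit Arguments. Unset Strict Implicit. Unset Printing Implicit Defensive.
Import Order.TTheory GRing.Theory Num.Theory.
Local Open Scope ring_scope.

Record network (R : realType) (N L : finType) := Network {
  snd_end : L -> N;
  rcv_end : L -> N;
  Rb : L -> R; Xb : L -> R;
  Bsend : L -> R; Brecv : L -> R;
  Kamp : L -> R;                   (* ampacity K~_l *)
  Gn : N -> R; Bn : N -> R;        (* nodal shunts *)
  pd : N -> R; qd : N -> R;
  vmin : N -> R; vmax : N -> R;
  thl_min : L -> R; thl_max : L -> R;
  thn_min : N -> R; thn_max : N -> R;
  pmin : N -> R; pmax : N -> R;
  qmin : N -> R; qmax : N -> R }.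

Section Model.
Variables (R : realType) (N L : finType) (net : network R N L).

Definition Aplus (n : N) (l : L) : R :=
  if n == snd_end net l then 1 else if n == rcv_end net l then -1 else 0.
Definition Aminus (n : N) (l : L) : R :=
  if n == snd_end net l then 0 else if n == rcv_end net l then -1 else 0.

Definition in_open (a b x : R) : Prop := a < x /\ x < b.

Record ovars := OVars {
  o_p : N -> R; o_q : N -> R; o_V : N -> R; o_v : N -> R; o_thn : N -> R;
  o_ps : L -> R; o_qs : L -> R; o_po : L -> R; o_qo : L -> R; o_thl : L -> R }.

Record socvars := SOCVars {
  c_p : N -> R; c_q : N -> R; c_V : N -> R; c_thn : N -> R;
  c_ps : L -> R; c_qs : L -> R; c_po : L -> R; c_qo : L -> R; c_thl : L -> R }.

Definition balance (p q V : N -> R) (ps qs po qo : L -> R) : Prop :=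
  forall n : N,
    p n - pd net n = \sum_(l : L) (Aplus n l * ps l - Aminus n l * po l) + Gn net n * V n
 /\ q n - qd net n = \sum_(l : L) (Aplus n l * qs l - Aminus n l * qo l) - Bn net n * V n.

Definition voltage_drop (V : N -> R) (ps qs po qo : L -> R) : Prop :=
  forall l : L,
    V (snd_end net l) - V (rcv_end net l)
    = 2 * Rb net l * ps l + 2 * Xb net l * qs l - Rb net l * po l - Xb net l * qo l.

Definition o_feasible (x : ovars) : Prop :=
  let p := o_p x in let q := o_q x in let V := o_V x in let v := o_v x in
  let thn := o_thn x in let ps := o_ps x in let qs := o_qs x in
  let po := o_po x in let qo := o_qo x in let thl := o_thl x in
  balance p q V ps qs po qo /\
  voltage_drop V ps qs po qo /\
  (forall l : L,
    let s := snd_end net l in let r := rcv_end net l in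
    v s * v r * sin (thl l) = Xb net l * ps l - Rb net l * qs l /\
      (ps l ^+ 2 + (qs l - V s * Bsend net l) ^+ 2) / V s <= Kamp net l /\
      ((ps l - po l) ^+ 2 + ((qs l - qo l) - V r * Brecv net l) ^+ 2) / V r
        <= Kamp net l /\
    thl l = thn s - thn r /\
    po l = (ps l ^+ 2 + qs l ^+ 2) / V s * Rb net l /\
              qo l = (ps l ^+ 2 + qs l ^+ 2) / V s * Xb net l /\
    in_open (thl_min net l) (thl_max net l) (thl l)) /\
  (forall n : N,
    V n = v n ^+ 2 /\
    in_open (vmin net n) (vmax net n) (v n) /\
    in_open (thn_min net n) (thn_max net n) (thn n) /\
    in_open (pmin net n) (pmax net n) (p n) /\
    in_open (qmin net n) (qmax net n) (q n)).

Definition soc_feasible (y : socvars) : Prop :=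
  let p := c_p y in let q := c_q y in let V := c_V y in
  let thn := c_thn y in let ps := c_ps y in let qs := c_qs y in
  let po := c_po y in let qo := c_qo y in let thl := c_thl y in
  balance p q V ps qs po qo /\
  voltage_drop V ps qs po qo /\
  (forall l : L,
    let s := snd_end net l in let r := rcv_end net l in
    let pr := ps l - po l in let qr := qs l - qo l in
    thl l = thn s - thn r /\
    in_open (thl_min net l) (thl_max net l) (thl l) /\
    (Kamp net l - V s * Bsend net l ^+ 2 + 2 * qs l * Bsend net l) * Xb net l >= qo l /\
    qo l >= (ps l ^+ 2 + qs l ^+ 2) / V s * Xb net l /\
    (Kamp net l - V r * Brecv net l ^+ 2 + 2 * qr * Brecv net l) * Xb net l >= qo l /\
    qo l >= (pr ^+ 2 + qr ^+ 2) / V r * Xb net l /\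
    po l * Xb net l = qo l * Rb net l /\
    thl l = Xb net l * ps l - Rb net l * qs l) /\
  (forall n : N,
    in_open (vmin net n ^+ 2) (vmax net n ^+ 2) (V n) /\
    in_open (thn_min net n) (thn_max net n) (thn n) /\
    in_open (pmin net n) (pmax net n) (p n) /\
    in_open (qmin net n) (qmax net n) (q n)).

Definition recover (y : socvars) : ovars :=
  let v := fun n => Num.sqrt (c_V y n) in
  OVars (c_p y) (c_q y) (c_V y) v (c_thn y)
        (c_ps y) (c_qs y) (c_po y) (c_qo y)
        (fun l => asin ((Xb net l * c_ps y l - Rb net l * c_qs y l)
                        / (v (snd_end net l) * v (rcv_end net l)))).

End Model.

Definition convex3 (R : realType) (S : R -> R -> R -> Prop) : Prop :=
  forall a1 b1 t1 a2 b2 t2 (lam : R), 0 <= lam -> lam <= 1 ->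
    S a1 b1 t1 -> S a2 b2 t2 ->
    S (lam * a1 + (1 - lam) * a2) (lam * b1 + (1 - lam) * b2)
      (lam * t1 + (1 - lam) * t2).

(* On the recovered point, constraint (C) of the o-ACOPF model reads
   v_s v_r sin θ^rec = X p_s - R q_s, which is exactly the SOC variable θ_l.
   Since |θ^rec| < θ^max <= π/2 and sin is increasing on [-π/2, π/2],
   sin² θ^rec <= sin² θ^max; multiplying by V_s V_r = v_s² v_r² gives the bound.
   For c >= 0 the set {V_s, V_r >= 0, c V_s V_r >= t²} is a rotated
   second-order cone; its convexity reduces to the cross-term estimate
   2 t1 t2 <= c (a1 b2 + a2 b1), an instance of AM-GM. *)
From HB Require Import structures.
From mathcomp Require Import all_boot all_order all_algebra.
From mathcomp Require Import all_classical all_reals all_analysis.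
From mathcomp Require Import ring lra.
Import Order.TTheory GRing.Theory Num.Theory.
Local Open Scope ring_scope.

Section AngleBound.
Variable R : realType.

Lemma le_pihalf_of_sub_itv (M : R) :
  (forall x : R, - M < x < M -> - (pi / 2) < x < pi / 2) -> M <= pi / 2.
Proof.
move=> sub_itv; rewrite leNgt; apply/negP => M_gt.
have pi_gt0 := @pi_gt0 R.
have /andP[_ x_lt] : - (pi / 2) < (pi / 2 + M) / 2 < pi / 2.
  by apply: sub_itv; apply/andP; split; lra.
lra.
Qed.

Lemma sin_sqr_le_sin_sqr (M th : R) :
  M <= pi / 2 -> - M < th < M -> sin th ^+ 2 <= sin M ^+ 2.
Proof.
move=> M_le /andP[th_gt th_lt].
have pi_gt0 := @pi_gt0 R.
have in_dom (x : R) : - M <= x <= M -> x \in `[(- (pi / 2)), pi / 2].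
  by move=> /andP[? ?]; rewrite in_itv /=; apply/andP; split; lra.
have M_in : M \in `[(- (pi / 2)), pi / 2] by apply: in_dom; apply/andP; split; lra.
have th_in : th \in `[(- (pi / 2)), pi / 2] by apply: in_dom; apply/andP; split; lra.
have Nth_in : - th \in `[(- (pi / 2)), pi / 2].
  by apply: in_dom; apply/andP; split; lra.
have sin_lt : sin th < sin M by rewrite ltr_sin.
have sinN_lt : - sin th < sin M by rewrite -sinN ltr_sin //; lra.
nra.
Qed.

Lemma sqr_le_of_sin_eq (a b M th t : R) :
  M <= pi / 2 -> - M < th < M -> a * b * sin th = t ->
  t ^+ 2 <= a ^+ 2 * b ^+ 2 * sin M ^+ 2.
Proof.
move=> M_le th_in <-.
rewrite !exprMn -mulrA -[X in _ <= X]mulrA.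
apply: ler_wpM2l; first exact: sqr_ge0.
apply: ler_wpM2l; first exact: sqr_ge0.
exact: sin_sqr_le_sin_sqr M_le th_in.
Qed.

End AngleBound.

Section RotatedCone.
Variable R : realType.

Lemma double_le_add_of_sqr_le_mul (x u w : R) :
  0 <= u -> 0 <= w -> x ^+ 2 <= u * w -> 2 * x <= u + w.
Proof.
move=> u_ge0 w_ge0 x_le.
have amgm : 4 * (u * w) <= (u + w) ^+ 2.
  by have := sqr_ge0 (u - w); nra.
rewrite -[u + w]ger0_norm ?addr_ge0 //.
apply: le_trans (ler_norm _) _.
by rewrite -ler_sqr ?normr_ge0 // !real_normK ?num_real //; nra.
Qed.

Lemma rotated_cone_convex (c : R) : 0 <= c ->
  convex3 (fun Vs Vr t : R => 0 <= Vs /\ 0 <= Vr /\ Vs * Vr * c >= t ^+ 2).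
Proof.
move=> c_ge0 a1 b1 t1 a2 b2 t2 lam lam_ge0 lam_le1
  [a1_ge0 [b1_ge0 t1_le]] [a2_ge0 [b2_ge0 t2_le]].
set mu := 1 - lam.
have mu_ge0 : 0 <= mu by rewrite /mu; lra.
have cross : 2 * (t1 * t2) <= a1 * b2 * c + a2 * b1 * c.
  apply: double_le_add_of_sqr_le_mul; rewrite ?mulr_ge0 //.
  have -> : a1 * b2 * c * (a2 * b1 * c) = a1 * b1 * c * (a2 * b2 * c) by ring.
  by rewrite exprMn ler_pM ?sqr_ge0.
split; first by rewrite addr_ge0 ?mulr_ge0.
split; first by rewrite addr_ge0 ?mulr_ge0.
have -> : (lam * a1 + mu * a2) * (lam * b1 + mu * b2) * c
    = lam ^+ 2 * (a1 * b1 * c) + mu ^+ 2 * (a2 * b2 * c)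
      + lam * mu * (a1 * b2 * c + a2 * b1 * c) by ring.
have -> : (lam * t1 + mu * t2) ^+ 2
    = lam ^+ 2 * t1 ^+ 2 + mu ^+ 2 * t2 ^+ 2 + lam * mu * (2 * (t1 * t2)) by ring.
by rewrite !lerD ?ler_wpM2l ?mulr_ge0 ?sqr_ge0.
Qed.

End RotatedCone.

Theorem theorem2 (R : realType) (N L : finType) (net : network R N L)
  (Hang : forall l : L,
     (forall x : R, thl_min net l < x < thl_max net l -> - (pi / 2) < x < pi / 2) /\
     thl_min net l = - thl_max net l)
  (y : socvars R N L) (Hy : soc_feasible net y) :
  (o_feasible net (recover net y) ->
     forall l : L,
       c_V y (snd_end net l) * c_V y (rcv_end net l) * sin (thl_max net l) ^+ 2
         >= c_thl y l ^+ 2)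
  /\ (forall l : L,
       convex3 (fun Vs Vr t : R =>
         0 <= Vs /\ 0 <= Vr /\ Vs * Vr * sin (thl_max net l) ^+ 2 >= t ^+ 2)).
Proof.
split; last by move=> l; apply: rotated_cone_convex; exact: sqr_ge0.
move=> [_ [_ [branch_o node_o]]] l.
have [sub_itv thl_sym] := Hang l.
rewrite thl_sym in sub_itv.
have [sin_o [_ [_ [_ [_ [_ [th_gt th_lt]]]]]]] := branch_o l.
have [_ [_ [branch_soc _]]] := Hy.
have [_ [_ [_ [_ [_ [_ [_ thl_def]]]]]]] := branch_soc l.
have [Vs_sqr _] := node_o (snd_end net l).
have [Vr_sqr _] := node_o (rcv_end net l).
rewrite thl_sym in th_gt; rewrite /= in sin_o th_gt th_lt Vs_sqr Vr_sqr.
rewrite Vs_sqr Vr_sqr thl_def.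
apply: sqr_le_of_sin_eq sin_o; first exact: le_pihalf_of_sub_itv sub_itv.
by rewrite th_gt th_lt.
Qed.
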